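(* Let $s\ge 1$, $q=2^s$, and let $k$ be an integer with $1\le k\le q/2$. Let $\beta\in\mathbb{F}_{q^2}$ be an element of multiplicative order $q+1$. Define $$g(X)=\prod_{i=\frac{q-k}{2}+1}^{\frac{q+k}{2}}(X-\beta^i)\quad\text{if $k$ is even},\qquad g(X)=\prod_{i=-\frac{k-1}{2}}^{\frac{k-1}{2}}(X-\beta^i)\quad\text{if $k$ is odd}.$$ Then $g(X)\in\mathbb{F}_q[X]$, $g$ is monic of degree $k$, $X^k g(X^{-1})=g(X)$, and, writing $g(X)=X^k+c_{k-1}X^{k-1}+\dots+c_1X+c_0$, the matrix $\mathsf{Companion}(c_0,\dots,c_{k-1})^k$ is MDS.
   Context: For $c_0,\dots,c_{k-1}\in\mathbb{F}_q$, $\mathsf{Companion}(c_0,\dots,c_{k-1})$ denotes the $k\times k$ matrix whose first $k-1$ rows are $e_2,e_3,\dots,e_k$ (ones on the superdiagonal, zeros elsewhere) and whose last row is $(c_0,c_1,\dots,c_{k-1})$. A linear code over $\mathbb{F}_q$ of length $n$ and dimension $k'$ is MDS if its minimal Hamming distance equals $n-k'+1$. A $k\times k$ matrix $M$ over $\mathbb{F}_q$ is called MDS if the $k\times 2k$ matrix $[I_k\mid M]$ generates an MDS code of length $2k$ and dimension $k$ (equivalently, minimal distance $k+1$). *)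

From HB Require Import structures.
From mathcomp Require Import all_boot all_order all_algebra.
Set Implicit Arguments. Unset Strict Implicit. Unset Printing Implicit Defensive.
Import GRing.Theory.
Local Open Scope ring_scope.

Definition Companion (R : nzRingType) (k : nat) (c : 'I_k -> R) : 'M[R]_k :=
  \matrix_(i < k, j < k) if (i.+1 < k)%N then (j == i.+1 :> nat)%:R else c j.

Definition hweight (R : nzRingType) (n : nat) (v : 'rV[R]_n) : nat :=
  #|[set j : 'I_n | v 0 j != 0]|.

(* The linear code over the subfield S (given as a predicate on the ambient
   field L) generated by the rows of G : its codewords are u *m G with u having
   all coordinates in S. *)
Definition codeword (L : fieldType) (S : pred L) (m n : nat)
  (G : 'M[L]_(m, n)) (c : 'rV[L]_n) : Prop :=
  exists u : 'rV[L]_m, (forall i, u 0 i \in S) /\ c = u *m G.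

Definition min_dist_eq (L : fieldType) (S : pred L) (m n : nat)
  (G : 'M[L]_(m, n)) (d : nat) : Prop :=
  (forall c, codeword S G c -> c != 0 -> (d <= hweight c)%N) /\
  (exists2 c, codeword S G c & c != 0 /\ hweight c = d).

(* A k x k matrix M (over the subfield S) is MDS if [I_k | M] generates a code
   over S of length 2k and dimension k with minimal distance k+1. *)
Definition is_MDS_matrix (L : fieldType) (S : pred L) (k : nat) (M : 'M[L]_k) : Prop :=
  min_dist_eq S (row_mx (1%:M : 'M[L]_k) M) k.+1.

(* the subfield F_q of a field L, as the fixed points of x |-> x^q *)
Definition subFq (L : fieldType) (q : nat) : pred L := fun x => x ^+ q == x.

Definition g_poly (L : finFieldType) (q k : nat) (beta : L) : {poly L} :=
  if ~~ odd k then
    \prod_(((q - k)./2).+1 <= i < ((q + k)./2).+1) ('X - (beta ^+ i)%:P)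
  else
    \prod_(0 <= j < k) ('X - (beta ^ (j%:Z - ((k.-1)./2)%:Z))%:P).

From HB Require Import structures.
From mathcomp Require Import all_boot all_order all_algebra.
From mathcomp Require Import finfield zify ring.

(* The roots of g are k consecutive powers beta^(b0 + j) of beta, and b0 is
   chosen so that this set is closed under inversion.  As beta^q = beta^-1,
   the Frobenius x |-> x^q permutes the roots, so g is defined over F_q; closure
   under inversion makes g self-reciprocal (in characteristic 2 the constant
   coefficient, whose square is 1, is 1).
   In characteristic 2, right multiplication by C = Companion(g_0, ..., g_{k-1})
   is multiplication by X modulo g on coefficient vectors.  Hence a codeword
   [u | u C^k] of [I | C^k] is the coefficient vector of u C^k + X^k u, a
   multiple of g of degree < 2k.  It vanishes at k consecutive powers of beta,
   whose order q + 1 exceeds 2k, so by the BCH bound it has more than k nonzero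
   coefficients; the codeword of e_0 has weight at most k + 1. *)

Set Implicit Arguments.
Unset Strict Implicit.
Unset Printing Implicit Defensive.

Import GRing.Theory.
Local Open Scope ring_scope.

Section HammingWeight.

Variable R : nzRingType.

Lemma hweightE n (v : 'rV[R]_n) : hweight v = (\sum_(j < n) (v 0 j != 0)%R)%N.
Proof. by rewrite /hweight -sum1_card big_mkcond; apply: eq_bigr => j _; rewrite inE. Qed.

Lemma hweight_row_mx m n (u : 'rV[R]_m) (v : 'rV[R]_n) :
  hweight (row_mx u v) = (hweight u + hweight v)%N.
Proof.
by rewrite !hweightE big_split_ord; congr (_ + _)%N; apply: eq_bigr => j _;
  rewrite (row_mxEl, row_mxEr).
Qed.

Lemma hweightN n (v : 'rV[R]_n) : hweight (- v) = hweight v.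
Proof. by rewrite !hweightE; apply: eq_bigr => j _; rewrite mxE oppr_eq0. Qed.

Lemma hweight_delta n (i : 'I_n) : hweight (delta_mx 0 i : 'rV[R]_n) = 1%N.
Proof.
rewrite /hweight -[RHS](cards1 i); apply: eq_card => j.
by rewrite !inE mxE eqxx /=; case: (j == i); rewrite ?eqxx // oner_neq0.
Qed.

Lemma hweight_le n (v : 'rV[R]_n) : (hweight v <= n)%N.
Proof. by rewrite /hweight -[X in (_ <= X)%N]card_ord max_card. Qed.

End HammingWeight.

Lemma unitmx_Vandermonde (F : fieldType) n (r : 'rV[F]_n) :
  injective (r 0) -> Vandermonde n r \in unitmx.
Proof.
move=> r_inj; rewrite unitmxE unitfE det_Vandermonde.
apply/prodf_neq0 => i _; apply/prodf_neq0 => j lt_ij; rewrite subr_eq0.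
by apply: contraTneq lt_ij => /r_inj ->; rewrite ltnn.
Qed.

Lemma horner_rVpoly_sum (R : comNzRingType) n (v : 'rV[R]_n) x :
  (rVpoly v).[x] = \sum_(i < n) v 0 i * x ^+ i.
Proof.
rewrite (horner_coef_wide _ (size_poly _ _)).
by apply: eq_bigr => i _; rewrite coef_rVpoly_ord.
Qed.

Lemma BCH_bound (F : fieldType) m n k (beta b : F) (v : 'rV[F]_m) :
  n.-primitive_root beta -> (m <= n)%N -> b != 0 -> v != 0 ->
  (forall j, (j < k)%N -> root (rVpoly v) (b * beta ^+ j)) ->
  (k < hweight v)%N.
Proof.
move=> pr le_mn b_neq0 v_neq0 v_roots; rewrite ltnNge; apply/negP => le_wk.
set E := [set i : 'I_m | v 0 i != 0] in le_wk.
pose e (l : 'I_#|E|) : 'I_m := enum_val l.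
pose x : 'cV[F]_#|E| := \col_l (v 0 (e l) * b ^+ e l).
have e_inj : injective (fun l => beta ^+ e l).
  move=> l l' /eqP; rewrite (eq_prim_root_expr pr).
  rewrite !modn_small ?(leq_trans (ltn_ord _) le_mn) // => /eqP/val_inj.
  exact: enum_val_inj.
(* The coefficients of [v] on its support [E] solve the square Vandermonde
   system formed by the first [#|E| <= k] root conditions. *)
have Vx0 : Vandermonde #|E| (\row_l beta ^+ e l) *m x = 0.
  apply/matrixP => j j0; rewrite !mxE.
  apply: etrans (eqP (v_roots j (leq_trans (ltn_ord j) le_wk))).
  rewrite horner_rVpoly_sum.
  rewrite [RHS](bigID (mem E)) /= [X in _ = _ + X]big1 ?addr0 => [|i]; last first.
    by rewrite inE negbK => /eqP ->; rewrite mul0r.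
  rewrite [RHS]big_enum_val /=; apply: eq_bigr => l _; rewrite !mxE.
  by rewrite exprMn -!exprM mulnC; ring.
have x0 : x = 0.
  have V_unit : Vandermonde #|E| (\row_l beta ^+ e l) \in unitmx.
    by apply: unitmx_Vandermonde => l l'; rewrite !mxE; apply: e_inj.
  by rewrite -[x](mulKmx V_unit) Vx0 mulmx0.
have [E0 | [i Ei]] := set_0Vmem E.
  case/eqP: v_neq0; apply/matrixP => i0 i; rewrite (ord1 i0) mxE.
  by have := in_set0 i; rewrite -E0 inE => /negbFE/eqP.
have /matrixP/(_ (enum_rank_in Ei i) 0) := x0.
rewrite !mxE /e enum_rankK_in // => /eqP.
rewrite mulf_eq0 expf_eq0 (negbTE b_neq0) andbF orbF.
by move: Ei; rewrite inE => /negbTE ->.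
Qed.

Lemma rVpoly_row_mx (R : nzRingType) m n (u : 'rV[R]_m) (v : 'rV[R]_n) :
  rVpoly (row_mx u v) = rVpoly u + 'X^m * rVpoly v.
Proof.
apply/polyP => i; rewrite coefD coefXnM; case: (ltnP i (m + n)) => [lt_i | le_i].
  have -> : i = Ordinal lt_i by []; rewrite coef_rVpoly_ord mxE.
  case: splitP => [j -> | j ->] /=; first by rewrite coef_rVpoly_ord addr0.
  rewrite addKn !coef_rVpoly_ord nth_default ?add0r //.
  exact: leq_trans (size_poly _ _) (leq_addr _ _).
by rewrite !nth_default ?if_same ?addr0 // (leq_trans (size_poly _ _)); lia.
Qed.

Lemma rVpoly_coefs_monic (R : nzRingType) k (g : {poly R}) :
  g \is monic -> size g = k.+1 -> rVpoly (\row_(j < k) g`_j) = g - 'X^k.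
Proof.
move=> g_monic size_g; apply/polyP => i; rewrite coefB coefXn coef_rVpoly.
case: insubP => [j _ <- | /negbTE ge_ik]; first by rewrite mxE (ltn_eqF (ltn_ord j)) subr0.
case: eqP => [-> | /eqP ne_ik].
  by move/monicP: g_monic; rewrite lead_coefE size_g => ->; rewrite subrr.
by rewrite nth_default ?subr0 // size_g ltn_neqAle eq_sym ne_ik leqNgt ge_ik.
Qed.

Section CompanionMatrix.

Variables (R : comNzRingType) (n : nat) (c : 'I_n.+1 -> R).
Let C := Companion c.

Lemma row_Companion (i : 'I_n) : row (widen_ord (leqnSn n) i) C = delta_mx 0 (lift ord0 i).
Proof. by apply/rowP => j; rewrite !mxE /= ltnS ltn_ord. Qed.

Lemma row_Companion_max : row ord_max C = \row_j c j.
Proof. by apply/rowP => j; rewrite !mxE ltnn. Qed.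

Lemma rVpoly_mul_Companion (v : 'rV[R]_n.+1) :
  rVpoly (v *m C) = 'X * rVpoly v + v 0 ord_max *: (rVpoly (\row_j c j) - 'X^(n.+1)).
Proof.
rewrite mulmx_sum_row [X in 'X * rVpoly X](row_sum_delta v) !raddf_sum mulr_sumr /=.
rewrite !big_ord_recr /= row_Companion_max -addrA; congr (_ + _).
  apply: eq_bigr => i _; rewrite row_Companion !linearZ /= !rVpoly_delta.
  by rewrite -scalerAr -exprS.
by rewrite !linearZ /= rVpoly_delta -scalerAr -exprS scalerBr addrC subrK.
Qed.

End CompanionMatrix.

Lemma dvdp_rVpoly_mul_Companion_exp (F : fieldType) n (c : 'I_n.+1 -> F)
    (v : 'rV[F]_n.+1) m :
  rVpoly (\row_j c j) - 'X^(n.+1) %| rVpoly (v *m Companion c ^+ m) - 'X^m * rVpoly v.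
Proof.
elim: m => [|m IHm]; first by rewrite expr0 mulmx1 expr0 mul1r subrr dvdp0.
have -> : rVpoly (v *m Companion c ^+ m.+1) - 'X^(m.+1) * rVpoly v =
    'X * (rVpoly (v *m Companion c ^+ m) - 'X^m * rVpoly v)
    + (v *m Companion c ^+ m) 0 ord_max *: (rVpoly (\row_j c j) - 'X^(n.+1)).
  by rewrite exprSr mulmxA rVpoly_mul_Companion mulrBr mulrA -exprS addrAC.
by rewrite dvdp_add ?dvdp_mull // -mul_polyC dvdp_mull.
Qed.

(* [u | u C^k] is, up to the order of its halves and a sign, the coefficient
   vector of [u C^k - X^k u]. *)
Lemma hweight_Companion_exp_gt (F : fieldType) n (c : 'I_n.+1 -> F) N (beta b : F) :
  N.-primitive_root beta -> (n.+1 + n.+1 <= N)%N -> b != 0 ->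
  (forall j, (j < n.+1)%N -> root (rVpoly (\row_j c j) - 'X^(n.+1)) (b * beta ^+ j)) ->
  forall u : 'rV[F]_n.+1, u != 0 ->
  (n.+1 < hweight (u *m row_mx 1%:M (Companion c ^+ n.+1)))%N.
Proof.
move=> pr le_N b_neq0 roots u u_neq0.
rewrite mul_mx_row mulmx1 hweight_row_mx addnC -(hweightN u) -hweight_row_mx.
apply: (BCH_bound pr le_N b_neq0) => [|j lt_j].
  by rewrite row_mx_eq0 oppr_eq0 negb_and u_neq0 orbT.
apply: root_dvdp (roots j lt_j).
by rewrite rVpoly_row_mx linearN mulrN dvdp_rVpoly_mul_Companion_exp.
Qed.

Lemma is_MDS_matrix_of_hweight_gt (F : fieldType) (S : pred F) n (M : 'M[F]_n.+1) :
  0 \in S -> 1 \in S ->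
  (forall u : 'rV[F]_n.+1, u != 0 -> (n.+1 < hweight (u *m row_mx 1%:M M))%N) ->
  is_MDS_matrix S M.
Proof.
move=> S0 S1 weight_gt; split.
  move=> _ [u [_ ->]] uM_neq0; apply: weight_gt.
  by apply: contraNneq uM_neq0 => ->; rewrite mul0mx.
pose e0 : 'rV[F]_n.+1 := delta_mx 0 0.
have e0_neq0 : e0 != 0.
  by apply/eqP => /matrixP/(_ 0 0); rewrite !mxE eqxx => /eqP; rewrite oner_eq0.
exists (e0 *m row_mx 1%:M M).
  by exists e0; split=> // i; rewrite mxE; case: (_ && _).
split.
  by rewrite mul_mx_row mulmx1 row_mx_eq0 negb_and e0_neq0.
apply/eqP; rewrite eqn_leq weight_gt // andbT mul_mx_row mulmx1 hweight_row_mx.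
by rewrite hweight_delta add1n ltnS hweight_le.
Qed.

Definition reciprocal (R : nzRingType) (k : nat) (p : {poly R}) : {poly R} :=
  \sum_(i < k.+1) p`_i *: 'X^(k - i).

Lemma coef_reciprocal (R : nzRingType) k (p : {poly R}) m :
  (reciprocal k p)`_m = if (m <= k)%N then p`_(k - m) else 0.
Proof.
rewrite coef_sum; under eq_bigr => i _ do rewrite coefZ coefXn.
case: leqP => [le_mk | lt_km].
  rewrite (bigD1 (Ordinal (leq_subr m k : k - m < k.+1)%N)) //= subKn // eqxx mulr1.
  rewrite big1 ?addr0 // => i /eqP i_neq; case: eqP => [m_eq|]; last by rewrite mulr0.
  by case: i_neq; apply: val_inj; rewrite /= m_eq subKn // -ltnS.
rewrite big1 // => i _; case: eqP => [m_eq|]; last by rewrite mulr0.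
by move: lt_km; rewrite m_eq ltnNge leq_subr.
Qed.

Lemma size_reciprocal (R : nzRingType) k (p : {poly R}) : (size (reciprocal k p) <= k.+1)%N.
Proof.
apply/leq_sizeP => m lt_km; rewrite coef_reciprocal.
by case: leqP => // le_mk; have := leq_ltn_trans le_mk lt_km; rewrite ltnn.
Qed.

Lemma horner_reciprocal (F : fieldType) k (p : {poly F}) x :
  (size p <= k.+1)%N -> x != 0 -> (reciprocal k p).[x] = x ^+ k * p.[x^-1].
Proof.
move=> le_p x_neq0; rewrite horner_sum (horner_coef_wide _ le_p) mulr_sumr.
apply: eq_bigr => i _; rewrite hornerZ hornerXn exprVn expfB_cond; first by rewrite mulrCA.
by rewrite (negbTE x_neq0) add0n -ltnS.
Qed.

Lemma size_prod_XsubC_ord (R : nzRingType) k (a : 'I_k -> R) :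
  size (\prod_(j < k) ('X - (a j)%:P)) = k.+1.
Proof. by rewrite size_prod_XsubC [index_enum _]unlock -enumT size_enum_ord. Qed.

Lemma root_prod_XsubC_ord (R : comNzRingType) k (a : 'I_k -> R) i :
  root (\prod_(j < k) ('X - (a j)%:P)) (a i).
Proof. by rewrite /root horner_prod (bigD1 i) //= hornerXsubC subrr mul0r. Qed.

Lemma coef_size_prod_XsubC_ord (R : nzRingType) k (a : 'I_k -> R) :
  (\prod_(j < k) ('X - (a j)%:P))`_k = 1.
Proof.
by rewrite -[k in _`_k]/(k.+1.-1) -(size_prod_XsubC_ord a) -lead_coefE lead_coef_prod_XsubC.
Qed.

Lemma eq_scale_prod_XsubC (F : fieldType) k (a : 'I_k -> F) (r : {poly F}) :
  injective a -> (size r <= k.+1)%N -> (forall j, root r (a j)) ->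
  r = r`_k *: \prod_(j < k) ('X - (a j)%:P).
Proof.
move=> a_inj le_r r_roots; set P := \prod_(j < k) _.
have [t] : exists t, r = t * \prod_(z <- map a (index_enum 'I_k)) ('X - z%:P).
  apply: uniq_roots_prod_XsubC; first by apply/allP => _ /mapP[j _ ->].
  by rewrite uniq_rootsE map_inj_uniq ?index_enum_uniq.
rewrite big_map -/P => r_eq; subst r.
have [-> | t_neq0] := eqVneq t 0; first by rewrite !mul0r coef0 scale0r.
have le_t : (size t <= 1)%N.
  move: le_r; rewrite size_Mmonic ?monic_prod_XsubC // size_prod_XsubC_ord.
  by rewrite addnS -[k.+1]add1n leq_add2r.
by rewrite [t]size1_polyC // mul_polyC coefZ coef_size_prod_XsubC_ord mulr1.
Qed.

Lemma coef_prod_XsubC_expn (R : comNzRingType) p n I (r : seq I) (a : I -> R) i :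
  p \in [pchar R] ->
  (\prod_(j <- r) ('X - (a j)%:P))`_i ^+ (p ^ n) =
  (\prod_(j <- r) ('X - (a j ^+ (p ^ n))%:P))`_i.
Proof.
move=> pcharRp; elim: n a => [|n IHn] a.
  by rewrite expr1; congr _`_i; apply: eq_bigr => j _; rewrite expr1.
rewrite expnSr exprM IHn -(pFrobenius_autE pcharRp) -coef_map map_prod_XsubC.
congr _`_i; rewrite (eq_bigr (fun j => 'X - (a j ^+ (p ^ n * p))%:P)) // => j _.
by rewrite exprM.
Qed.

Section InversionClosedRoots.

Variables (F : fieldType) (k : nat) (a : 'I_k -> F).
Hypothesis a_rev : forall j, a (rev_ord j) = (a j)^-1.
Let P := \prod_(j < k) ('X - (a j)%:P).

Lemma coef_prod_XsubC_inv_expn p n i :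
  p \in [pchar F] -> (forall j, a j ^+ (p ^ n) = (a j)^-1) -> P`_i ^+ (p ^ n) = P`_i.
Proof.
move=> pcharFp a_expn.
rewrite /P coef_prod_XsubC_expn // [in RHS](reindex_inj rev_ord_inj).
by under eq_bigr do rewrite a_expn -a_rev.
Qed.

Lemma reciprocal_prod_XsubC_inv :
  2 \in [pchar F] -> injective a -> (forall j, a j != 0) -> reciprocal k P = P.
Proof.
move=> pcharF2 a_inj a_neq0.
have r_roots j : root (reciprocal k P) (a j).
  rewrite /root horner_reciprocal ?size_prod_XsubC_ord // -a_rev.
  by rewrite (eqP (root_prod_XsubC_ord a _)) mulr0.
have := eq_scale_prod_XsubC a_inj (size_reciprocal k P) r_roots.
rewrite coef_reciprocal leqnn subnn -/P => rE.
have /eqP := congr1 (fun q : {poly F} => q`_0) rE.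
rewrite coef_reciprocal subn0 coefZ coef_size_prod_XsubC_ord.
rewrite eq_sym -expr2 sqrf_eq1 (oppr_pchar2 pcharF2) orbb => /eqP P_0.
by rewrite rE P_0 scale1r.
Qed.

End InversionClosedRoots.

Section PrimitiveRootPowers.

Variables (F : fieldType) (n : nat) (beta : F).
Hypothesis pr : n.-primitive_root beta.

Lemma prim_root_neq0 : beta != 0.
Proof. by rewrite (prim_root_eq0 pr) -lt0n (prim_order_gt0 pr). Qed.

Lemma prim_root_expr_pred e : (beta ^+ e) ^+ n.-1 = (beta ^+ e)^-1.
Proof.
apply/esym/mulr1_eq; rewrite -exprS prednK ?(prim_order_gt0 pr) //.
by rewrite exprAC (prim_expr_order pr) expr1n.
Qed.

Lemma prim_root_expr_addn_inj b0 k :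
  (k <= n)%N -> injective (fun j : 'I_k => beta ^+ (b0 + j)).
Proof.
move=> le_kn i j; rewrite !exprD => /(mulfI (expf_neq0 b0 prim_root_neq0))/eqP.
rewrite (eq_prim_root_expr pr) !modn_small ?(leq_trans (ltn_ord _) le_kn) //.
by move/eqP/val_inj.
Qed.

Lemma prim_root_expr_addn_rev b0 k (j : 'I_k) :
  (n %| b0 + (b0 + k.-1))%N -> beta ^+ (b0 + rev_ord j) = (beta ^+ (b0 + j))^-1.
Proof.
move=> n_dvd; apply/esym/mulr1_eq; rewrite -exprD; apply/eqP; rewrite -(prim_order_dvd pr).
suff -> : (b0 + j + (b0 + rev_ord j) = b0 + (b0 + k.-1))%N by [].
by rewrite /=; have := ltn_ord j; lia.
Qed.

End PrimitiveRootPowers.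

Lemma g_poly_prod_XsubC (L : finFieldType) q k (beta : L) :
  ~~ odd q -> (0 < k <= q)%N -> q.+1.-primitive_root beta ->
  exists2 b0, g_poly q k beta = \prod_(j < k) ('X - (beta ^+ (b0 + j))%:P)
            & (q.+1 %| b0 + (b0 + k.-1))%N.
Proof.
move=> q_even /andP[k_gt0 le_kq] pr; rewrite /g_poly.
have [q' q_eq] : exists q', q = q'.*2 by exists q./2; rewrite even_halfK.
subst q.
case: ifP => [k_even | /negbFE k_odd].
  have [k' k_eq] : exists k', k = k'.*2 by exists k./2; rewrite even_halfK ?k_even.
  subst k; rewrite -doubleB -doubleD !doubleK leq_double in le_kq *.
  exists (q' - k').+1; last by apply/dvdnP; exists 1%N; lia.
  have -> : ((q' + k').+1 = (q' - k').+1 + k'.*2)%N by lia.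
  rewrite -{1}[(q' - k').+1]add0n big_addn addKn big_mkord.
  by under eq_bigr do rewrite addnC.
have [m k_eq] : exists m, k = m.*2.+1.
  by exists k./2; rewrite -[LHS]odd_double_half k_odd.
subst k; rewrite /= doubleK.
exists (q'.*2.+1 - m)%N; last by apply/dvdnP; exists 2%N; lia.
rewrite big_mkord; apply: eq_bigr => j _; congr ('X - _%:P).
apply: (mulIf (expf_neq0 m (prim_root_neq0 pr))); rewrite -exprD.
have -> : (q'.*2.+1 - m + j + m = q'.*2.+1 + j)%N by lia.
rewrite [RHS]exprD (prim_expr_order pr) mul1r -[beta ^+ m]/(beta ^ m%:Z).
by rewrite -expfzDr ?subrK // (prim_root_neq0 pr).
Qed.

Theorem mainTheorem2 (s : nat) (L : finFieldType) (k : nat) (beta : L) :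
  (1 <= s)%N ->
  #|L| = ((2 ^ s) ^ 2)%N ->
  (1 <= k <= (2 ^ s)./2)%N ->
  (2 ^ s).+1.-primitive_root beta ->
  let q := (2 ^ s)%N in
  let g := g_poly q k beta in
  (forall i : nat, g`_i \in subFq q) /\
  g \is monic /\ size g = k.+1 /\
  \sum_(i < k.+1) g`_i *: 'X^(k - i) = g /\
  is_MDS_matrix (subFq q)
    ((Companion (fun j : 'I_k => g`_j)) ^+ k).
Proof.
move=> s_gt0 card_L /andP[k_gt0 le_k_q2] pr q g.
have q_even : ~~ odd q by rewrite oddX; case: (s) s_gt0.
have le_2k_q : (k + k <= q)%N by rewrite addnn -[q](even_halfK q_even) leq_double.
have le_k_q : (k <= q)%N := leq_trans (leq_addr k k) le_2k_q.
have pcharL2 : 2 \in [pchar L].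
  by apply: (@card_finPcharP _ _ (s * 2)); rewrite // card_L expnM.
have [b0 gE b0_dvd] := g_poly_prod_XsubC q_even (introT andP (conj k_gt0 le_k_q)) pr.
rewrite -/g in gE.
pose a (j : 'I_k) := beta ^+ (b0 + j).
have a_rev j : a (rev_ord j) = (a j)^-1 := prim_root_expr_addn_rev pr j b0_dvd.
have a_inj : injective a := prim_root_expr_addn_inj (b0 := b0) pr (leqW le_k_q).
have g_monic : g \is monic by rewrite gE monic_prod_XsubC.
have size_g : size g = k.+1 by rewrite gE size_prod_XsubC_ord.
split; [|split; [done|split; [done|split]]].
- move=> i; apply/eqP; rewrite gE; apply: coef_prod_XsubC_inv_expn => // j.
  exact: prim_root_expr_pred pr _.
- change (reciprocal k g = g); rewrite gE; apply: reciprocal_prod_XsubC_inv => // j.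
  exact: expf_neq0 (prim_root_neq0 pr).
have [n k_eq] : exists n, k = n.+1 by exists k.-1; rewrite prednK.
subst k; apply: is_MDS_matrix_of_hweight_gt.
- by rewrite unfold_in /subFq expr0n expn_eq0.
- by rewrite unfold_in /subFq expr1n.
apply: (hweight_Companion_exp_gt pr (leqW le_2k_q) (expf_neq0 b0 (prim_root_neq0 pr))).
(* [Companion] stores [c] rather than [- c]: in characteristic 2 it is the
   companion matrix of [g]. *)
move=> j lt_jn; rewrite rVpoly_coefs_monic // -addrA -opprD.
rewrite (addrr_pchar2 (rmorph_pchar polyC pcharL2)) subr0 -exprD gE.
exact: (root_prod_XsubC_ord a (Ordinal lt_jn)).
Qed.
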